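(* Let $I\subseteq\mathbb{R}_+$ be a nonempty, non-singleton interval, let $n\in\mathbb{N}$, and let $\Phi: I\to\mathbb{R}_+$ be subadditive of order $n$. Then for all $x,y\in I$ with $x+y\in I$, $$\Phi(x+y)\leq \max\{\Phi(x)+(2^n-1)\Phi(y),\ (2^n-1)\Phi(x)+\Phi(y)\}.$$
   Context: $\mathbb{R}_+$ denotes the set of nonnegative real numbers. For $n\in\mathbb{N}$, a function $\Phi: I\to\mathbb{R}_+$ is called subadditive of order $n$ if for all $x,y\in I$ with $y>0$ and $x+y\in I$ one has $\Phi(x+y)\leq \Phi(x)+\frac{(x+y)^n-x^n}{y^n}\Phi(y)$. *)

From Stdlib Require Import Reals.
Open Scope R_scope.

Definition is_interval (I : R -> Prop) : Prop :=
  forall a b c, I a -> I c -> a <= b -> b <= c -> I b.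

Definition nonneg_nondegenerate_interval (I : R -> Prop) : Prop :=
  is_interval I /\ (forall x, I x -> 0 <= x) /\ (exists a b, I a /\ I b /\ a <> b).

Definition nonneg_on (I : R -> Prop) (Phi : R -> R) : Prop :=
  forall x, I x -> 0 <= Phi x.

Definition subadditive_of_order (n : nat) (I : R -> Prop) (Phi : R -> R) : Prop :=
  forall x y, I x -> I y -> 0 < y -> I (x + y) ->
    Phi (x + y) <= Phi x + ((x + y) ^ n - x ^ n) / (y ^ n) * Phi y.

From Stdlib Require Import Reals Lra.
Open Scope R_scope.

(* For fixed y >= 0 the map t |-> (t + y)^n - t^n is nondecreasing on R_+, so
   for 0 <= x <= y the coefficient ((x + y)^n - x^n) / y^n of the order-n
   subadditivity inequality is at most ((2y)^n - y^n) / y^n = 2^n - 1.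
   Applying the inequality with the larger of x, y in the role of y gives one
   of the two bounds of the maximum. *)

Lemma pow_add_sub_pow_le (n : nat) (x z y : R) :
  0 <= x -> x <= z -> 0 <= y ->
  (x + y) ^ n - x ^ n <= (z + y) ^ n - z ^ n.
Proof.
  intros hx hxz hy.
  induction n as [|n IH]; simpl; [lra|].
  (* (t + y)^(n+1) - t^(n+1) = (t + y) ((t + y)^n - t^n) + y t^n *)
  assert (Hdiff : 0 <= (x + y) ^ n - x ^ n).
  { assert (x ^ n <= (x + y) ^ n) by (apply pow_incr; lra). lra. }
  assert (Hpow : x ^ n <= z ^ n) by (apply pow_incr; lra).
  assert ((x + y) * ((x + y) ^ n - x ^ n) <= (z + y) * ((z + y) ^ n - z ^ n))
    by (apply Rmult_le_compat; lra).
  assert (y * x ^ n <= y * z ^ n) by (apply Rmult_le_compat_l; lra).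
  nra.
Qed.

Lemma subadditivity_coef_le (n : nat) (x y : R) :
  0 <= x -> x <= y -> 0 < y ->
  ((x + y) ^ n - x ^ n) / y ^ n <= 2 ^ n - 1.
Proof.
  intros hx hxy hy.
  assert (Hmono := pow_add_sub_pow_le n x y y hx hxy (Rlt_le _ _ hy)).
  replace (y + y) with (2 * y) in Hmono by ring.
  rewrite Rpow_mult_distr in Hmono.
  assert (hyn : 0 < y ^ n) by (apply pow_lt; lra).
  apply (Rmult_le_reg_r (y ^ n)); [exact hyn|].
  unfold Rdiv. rewrite Rmult_assoc, Rinv_l by lra. lra.
Qed.

Lemma subadditive_of_order_le_of_le (I : R -> Prop) (n : nat) (Phi : R -> R)
    (x y : R) :
  nonneg_on I Phi -> subadditive_of_order n I Phi ->
  I x -> I y -> I (x + y) -> 0 <= x -> x <= y ->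
  Phi (x + y) <= Phi x + (2 ^ n - 1) * Phi y.
Proof.
  intros Hnn Hsub Ix Iy Ixy hx hxy.
  assert (py := Hnn y Iy).
  assert (h2n : 1 <= 2 ^ n) by (apply pow_R1_Rle; lra).
  destruct (Req_dec y 0) as [-> | hy0].
  - rewrite Rplus_0_r. nra.
  - assert (S := Hsub x y Ix Iy ltac:(lra) Ixy).
    assert (C := subadditivity_coef_le n x y hx hxy ltac:(lra)).
    assert (((x + y) ^ n - x ^ n) / y ^ n * Phi y <= (2 ^ n - 1) * Phi y)
      by (apply Rmult_le_compat_r; lra).
    lra.
Qed.

Theorem proposition2p5 (I : R -> Prop) (n : nat) (Phi : R -> R) :
  nonneg_nondegenerate_interval I ->
  nonneg_on I Phi ->
  subadditive_of_order n I Phi ->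
  forall x y, I x -> I y -> I (x + y) ->
    Phi (x + y) <= Rmax (Phi x + (2 ^ n - 1) * Phi y) ((2 ^ n - 1) * Phi x + Phi y).
Proof.
  intros [_ [Hpos _]] Hnn Hsub x y Ix Iy Ixy.
  destruct (Rle_lt_dec x y) as [hxy | hyx].
  - eapply Rle_trans; [|apply Rmax_l].
    exact (subadditive_of_order_le_of_le I n Phi x y Hnn Hsub Ix Iy Ixy
             (Hpos x Ix) hxy).
  - eapply Rle_trans; [|apply Rmax_r].
    rewrite (Rplus_comm x y) in Ixy |- *. rewrite (Rplus_comm _ (Phi y)).
    exact (subadditive_of_order_le_of_le I n Phi y x Hnn Hsub Iy Ix Ixy
             (Hpos y Iy) (Rlt_le _ _ hyx)).
Qed.
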